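(* Let $Q$ be a non-trivial quotient of the identity functor on the category of groups. Then the essential image of $Q$ contains either a non-trivial finite cyclic group, or all free abelian groups $\mathbb{Z}^{\oplus X}$ ($X$ any set).
   Context: A quotient of the identity functor on the category of groups is a functor $Q$ together with a natural transformation $q:\mathrm{Id}\to Q$ such that each $q_G:G\to Q(G)$ is surjective (equivalently $Q(G)=G/F(G)$ for a subfunctor $F$ of the identity with $F(G)$ normal). It is non-trivial if $Q(G)\neq 1$ for some group $G$. The essential image of $Q$ is the class of groups isomorphic to $Q(G)$ for some group $G$. *)

From Stdlib Require Import ZArith List.
Open Scope Z_scope.

Record Group : Type := MkGroup {
  carrier :> Type;
  gmul : carrier -> carrier -> carrier;
  gone : carrier;
  ginv : carrier -> carrier;
  gmulA : forall x y z, gmul x (gmul y z) = gmul (gmul x y) z;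
  gmul1l : forall x, gmul gone x = x;
  gmulVl : forall x, gmul (ginv x) x = gone
}.

Record Hom (G H : Group) : Type := MkHom {
  hfun :> carrier G -> carrier H;
  hmul : forall x y, hfun (gmul G x y) = gmul H (hfun x) (hfun y)
}.
Arguments hfun {G H} _ _.

Definition idHom (G : Group) : Hom G G :=
  MkHom G G (fun x => x) (fun x y => eq_refl).

Definition compHom {G H K : Group} (g : Hom H K) (f : Hom G H) : Hom G K :=
  MkHom G K (fun x => g (f x))
    (fun x y => eq_trans (f_equal (hfun g) (hmul _ _ f x y)) (hmul _ _ g (f x) (f y))).

Record GrpFunctor : Type := MkFunctor {
  Fobj :> Group -> Group;
  Fmap : forall G H : Group, Hom G H -> Hom (Fobj G) (Fobj H);
  Fmap_id : forall G (x : Fobj G), Fmap G G (idHom G) x = x;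
  Fmap_comp : forall G H K (g : Hom H K) (f : Hom G H) (x : Fobj G),
      Fmap G K (compHom g f) x = Fmap H K g (Fmap G H f x)
}.

Record IdQuotient : Type := MkIdQuotient {
  QF :> GrpFunctor;
  qnat : forall G : Group, Hom G (QF G);
  qnat_natural : forall (G H : Group) (f : Hom G H) (x : G),
      Fmap QF G H f (qnat G x) = qnat H (f x);
  qnat_surj : forall (G : Group) (y : QF G), exists x : G, qnat G x = y
}.

Definition nontrivial_quotient (Q : IdQuotient) : Prop :=
  exists (G : Group) (y : Q G), y <> gone (Q G).

Fixpoint gpow_nat (G : Group) (g : G) (n : nat) : G :=
  match n with
  | O => gone G
  | S n => gmul G g (gpow_nat G g n)
  end.

Definition gpow (G : Group) (g : G) (k : Z) : G :=
  match k with
  | Z0 => gone G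
  | Zpos p => gpow_nat G g (Pos.to_nat p)
  | Zneg p => ginv G (gpow_nat G g (Pos.to_nat p))
  end.

Definition nontrivial_finite_cyclic (H : Group) : Prop :=
  (exists g : H, forall a : H, exists k : Z, a = gpow H g k) /\
  (exists l : list H, forall a : H, In a l) /\
  (exists a : H, a <> gone H).

(* Finitely supported functions X -> Z, i.e. elements of Z^{(+)X}. *)
Definition fin_supp {X : Type} (f : X -> Z) : Prop :=
  exists l : list X, forall x, f x <> 0 -> In x l.

Definition iso_free_abelian (H : Group) (X : Type) : Prop :=
  exists phi : H -> (X -> Z),
    (forall a, fin_supp (phi a)) /\
    (forall a b, phi (gmul H a b) = fun x => phi a x + phi b x) /\
    (forall a b, phi a = phi b -> a = b) /\
    (forall f : X -> Z, fin_supp f -> exists a, phi a = f).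

Definition in_ess_image (Q : IdQuotient) (P : Group -> Prop) : Prop :=
  exists G : Group, P (Q G).

(* Q(Z) is a quotient of Z generated by the image of 1, and it is non-trivial
   because every element of every Q(G) is the image of that generator under
   Q(Z -> G, 1 |-> g). If q_Z : Z -> Q(Z) is not injective, Q(Z) is therefore a
   non-trivial finite cyclic group. If it is injective, it is an isomorphism,
   and naturality with respect to the coordinate projections Z^(X) -> Z shows
   that applying q_Z^-1 o Q(pr_x) in each coordinate x identifies Q(Z^(X))
   with Z^(X). *)
From Stdlib Require Import ZArith List Lia Classical ClassicalEpsilon
  ProofIrrelevance FunctionalExtensionality.
Open Scope Z_scope.

Section GroupTheory.
Variable G : Group.

Lemma gmulV (x : G) : gmul G x (ginv G x) = gone G.
Proof.
  rewrite <- (gmul1l G (gmul G x (ginv G x))).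
  rewrite <- (gmulVl G (ginv G x)) at 1.
  rewrite <- gmulA, (gmulA G (ginv G x) x (ginv G x)), gmulVl, gmul1l.
  apply gmulVl.
Qed.

Lemma gmul1r (x : G) : gmul G x (gone G) = x.
Proof. rewrite <- (gmulVl G x), gmulA, gmulV, gmul1l. reflexivity. Qed.

Lemma gmulI (a b c : G) : gmul G a b = gmul G a c -> b = c.
Proof.
  intro E.
  rewrite <- (gmul1l G b), <- (gmul1l G c), <- (gmulVl G a), <- !gmulA, E.
  reflexivity.
Qed.

Lemma ginv_uniq (a b : G) : gmul G a b = gone G -> a = ginv G b.
Proof. intro E. rewrite <- (gmul1r a), <- (gmulV b), gmulA, E, gmul1l. reflexivity. Qed.

Lemma ginv1 : ginv G (gone G) = gone G.
Proof. symmetry. apply ginv_uniq, gmul1l. Qed.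

Lemma ginvM (a b : G) : ginv G (gmul G a b) = gmul G (ginv G b) (ginv G a).
Proof.
  symmetry. apply ginv_uniq.
  rewrite <- gmulA, (gmulA G (ginv G a) a b), gmulVl, gmul1l. apply gmulVl.
Qed.

Lemma gpow_natSr (g : G) n : gpow_nat G g (S n) = gmul G (gpow_nat G g n) g.
Proof.
  induction n as [|n IH]; simpl in *.
  - rewrite gmul1l, gmul1r. reflexivity.
  - rewrite IH at 1; rewrite gmulA. reflexivity.
Qed.

Lemma gpow_of_nat (g : G) n : gpow G g (Z.of_nat n) = gpow_nat G g n.
Proof. destruct n; simpl; [|rewrite SuccNat2Pos.id_succ]; reflexivity. Qed.

Lemma gpow_opp_of_nat (g : G) n : gpow G g (- Z.of_nat n) = ginv G (gpow_nat G g n).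
Proof. destruct n; simpl; [rewrite ginv1 | rewrite SuccNat2Pos.id_succ]; reflexivity. Qed.

Lemma gpow_succ (g : G) k : gpow G g (k + 1) = gmul G (gpow G g k) g.
Proof.
  destruct (Z_le_gt_dec 0 k) as [Hk|Hk].
  - rewrite <- (Z2Nat.id k Hk).
    replace (Z.of_nat (Z.to_nat k) + 1) with (Z.of_nat (S (Z.to_nat k))) by lia.
    rewrite !gpow_of_nat. apply gpow_natSr.
  - set (n := Z.to_nat (- k - 1)).
    replace k with (- Z.of_nat (S n)) by (unfold n; lia).
    replace (- Z.of_nat (S n) + 1) with (- Z.of_nat n) by lia.
    rewrite !gpow_opp_of_nat. simpl.
    rewrite ginvM, <- gmulA, gmulVl, gmul1r. reflexivity.
Qed.

Lemma gpow_pred (g : G) k : gpow G g (k - 1) = gmul G (gpow G g k) (ginv G g).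
Proof.
  replace k with ((k - 1) + 1) at 2 by lia.
  rewrite gpow_succ, <- gmulA, gmulV, gmul1r. reflexivity.
Qed.

Lemma gpowD (g : G) m n : gpow G g (m + n) = gmul G (gpow G g m) (gpow G g n).
Proof.
  revert m. induction n using Z.peano_ind; intro m.
  - rewrite Z.add_0_r. simpl. rewrite gmul1r. reflexivity.
  - rewrite <- !Z.add_1_r, Z.add_assoc, !gpow_succ, IHn, gmulA. reflexivity.
  - rewrite <- !Z.sub_1_r, Z.add_sub_assoc, !gpow_pred, IHn, gmulA. reflexivity.
Qed.

Lemma gpow1 k : gpow G (gone G) k = gone G.
Proof.
  assert (Hnat : forall n, gpow_nat G (gone G) n = gone G).
  { induction n as [|n IH]; simpl; [|rewrite IH, gmul1l]; reflexivity. }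
  destruct k; simpl; rewrite ?Hnat, ?ginv1; reflexivity.
Qed.

End GroupTheory.

Section Homomorphisms.
Variables (G H : Group) (h : Hom G H).

Lemma hom1 : h (gone G) = gone H.
Proof. apply (gmulI H (h (gone G))). rewrite <- hmul, gmul1l, gmul1r. reflexivity. Qed.

Lemma homV x : h (ginv G x) = ginv H (h x).
Proof. apply ginv_uniq. rewrite <- hmul, gmulVl. apply hom1. Qed.

Lemma hom_gpow g k : h (gpow G g k) = gpow H (h g) k.
Proof.
  assert (Hnat : forall n, h (gpow_nat G g n) = gpow_nat H (h g) n).
  { induction n as [|n IH]; simpl; [apply hom1 | rewrite hmul, IH; reflexivity]. }
  destruct k; simpl; [apply hom1 | apply Hnat | rewrite homV, Hnat; reflexivity].
Qed.

End Homomorphisms.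

Definition Zgroup : Group :=
  MkGroup Z Z.add 0 Z.opp Z.add_assoc Z.add_0_l Z.add_opp_diag_l.

Lemma gpow_Zgroup (a k : Z) : gpow Zgroup a k = a * k.
Proof.
  assert (Hnat : forall n, gpow_nat Zgroup a n = a * Z.of_nat n).
  { induction n as [|n IH]; simpl gpow_nat; rewrite ?IH; lia. }
  destruct k; simpl gpow; rewrite ?Hnat; lia.
Qed.

Definition gpow_hom (G : Group) (g : G) : Hom Zgroup G :=
  MkHom Zgroup G (gpow G g) (gpowD G g).

Section HomomorphismsFromZ.
Variables (H : Group) (h : Hom Zgroup H).

Lemma hom_Z_gpow k : h k = gpow H (h 1) k.
Proof. rewrite <- hom_gpow, gpow_Zgroup, Z.mul_1_l. reflexivity. Qed.

Lemma hom_Z_mod k : h k = gone H -> forall a, h a = h (a mod k).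
Proof.
  intros Hk a.
  rewrite (Z_div_mod_eq_full a k) at 1. rewrite Z.add_comm.
  change (a mod k + k * (a / k)) with (gmul Zgroup (a mod k) (k * (a / k))).
  rewrite hmul, <- gpow_Zgroup, hom_gpow, Hk, gpow1, gmul1r. reflexivity.
Qed.

Lemma hom_Z_kernel m n : h m = h n -> h (n - m) = gone H.
Proof.
  intro E. apply (gmulI H (h m)).
  rewrite <- hmul, gmul1r, E. simpl. f_equal. lia.
Qed.

Lemma hom_Z_finite_image k :
  0 < k -> h k = gone H -> exists l : list H, forall a, In (h a) l.
Proof.
  intros Hk Hker.
  exists (map (fun i => h (Z.of_nat i)) (seq 0 (Z.to_nat k))).
  intro a. rewrite (hom_Z_mod k Hker a).
  pose proof (Z.mod_pos_bound a k Hk).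
  rewrite <- (Z2Nat.id (a mod k)) by lia.
  apply (in_map (fun i : nat => h (Z.of_nat i))), in_seq. lia.
Qed.

End HomomorphismsFromZ.

Section FreeAbelian.
Variable X : Type.

Lemma fin_supp0 : fin_supp (fun _ : X => 0).
Proof. exists nil. intros x Hx. lia. Qed.

Lemma fin_suppD (f g : X -> Z) :
  fin_supp f -> fin_supp g -> fin_supp (fun x => f x + g x).
Proof.
  intros [l1 H1] [l2 H2]. exists (l1 ++ l2). intros x Hx. apply in_or_app.
  destruct (Z.eq_dec (f x) 0); [right; apply H2 | left; apply H1]; lia.
Qed.

Lemma fin_suppN (f : X -> Z) : fin_supp f -> fin_supp (fun x => - f x).
Proof. intros [l Hl]. exists l. intros x Hx. apply Hl. lia. Qed.

Definition fin_supp_fun := {f : X -> Z | fin_supp f}.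

Lemma fin_supp_fun_ext (a b : fin_supp_fun) : proj1_sig a = proj1_sig b -> a = b.
Proof.
  destruct a as [a Ha], b as [b Hb]; simpl; intro E; subst.
  f_equal. apply proof_irrelevance.
Qed.

Definition fs_add (a b : fin_supp_fun) : fin_supp_fun :=
  exist _ _ (fin_suppD _ _ (proj2_sig a) (proj2_sig b)).
Definition fs_zero : fin_supp_fun := exist _ _ fin_supp0.
Definition fs_opp (a : fin_supp_fun) : fin_supp_fun :=
  exist _ _ (fin_suppN _ (proj2_sig a)).

Lemma fs_addA a b c : fs_add a (fs_add b c) = fs_add (fs_add a b) c.
Proof. apply fin_supp_fun_ext; simpl. extensionality x. lia. Qed.

Lemma fs_add0l a : fs_add fs_zero a = a.
Proof. apply fin_supp_fun_ext; simpl. extensionality x. lia. Qed.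

Lemma fs_addNl a : fs_add (fs_opp a) a = fs_zero.
Proof. apply fin_supp_fun_ext; simpl. extensionality x. lia. Qed.

Definition free_abelian : Group :=
  MkGroup fin_supp_fun fs_add fs_zero fs_opp fs_addA fs_add0l fs_addNl.

Definition coord_hom (x : X) : Hom free_abelian Zgroup :=
  MkHom free_abelian Zgroup (fun a => proj1_sig a x) (fun a b => eq_refl).

Lemma iso_free_abelian_of_retraction (H : Group) (p : Hom free_abelian H)
    (phi : H -> X -> Z) :
  (forall y, exists a, p a = y) -> (forall a, phi (p a) = proj1_sig a) ->
  iso_free_abelian H X.
Proof.
  intros p_surj phi_p. exists phi. split; [|split; [|split]].
  - intro y. destruct (p_surj y) as [a <-]. rewrite phi_p. apply proj2_sig.
  - intros y y'. destruct (p_surj y) as [a <-], (p_surj y') as [b <-].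
    rewrite <- hmul, !phi_p. reflexivity.
  - intros y y'. destruct (p_surj y) as [a <-], (p_surj y') as [b <-].
    rewrite !phi_p. intro E. f_equal. apply fin_supp_fun_ext, E.
  - intros f Hf. exists (p (exist _ f Hf)). apply phi_p.
Qed.

End FreeAbelian.

Section QuotientOfIdentity.
Variable Q : IdQuotient.

Lemma qnat_Z_generates (G : Group) (g : G) :
  Fmap Q _ _ (gpow_hom G g) (qnat Q Zgroup 1) = qnat Q G g.
Proof. rewrite qnat_natural. simpl. rewrite gmul1r. reflexivity. Qed.

Lemma qnat_Z1_neq1 : nontrivial_quotient Q -> qnat Q Zgroup 1 <> gone (Q Zgroup).
Proof.
  intros [G [y Hy]] E. apply Hy.
  destruct (qnat_surj Q G y) as [g <-].
  rewrite <- qnat_Z_generates, E. apply hom1.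
Qed.

Lemma quotient_Z_cyclic (y : Q Zgroup) :
  exists k, y = gpow (Q Zgroup) (qnat Q Zgroup 1) k.
Proof.
  destruct (qnat_surj Q Zgroup y) as [k <-]. exists k. apply hom_Z_gpow.
Qed.

Lemma quotient_Z_finite (m n : Z) :
  m <> n -> qnat Q Zgroup m = qnat Q Zgroup n ->
  exists l : list (Q Zgroup), forall y, In y l.
Proof.
  intros Hmn E.
  assert (Hker : exists k, 0 < k /\ qnat Q Zgroup k = gone (Q Zgroup)).
  { destruct (Z_lt_ge_dec m n).
    - exists (n - m). split; [lia | apply hom_Z_kernel, E].
    - exists (m - n). split; [lia | apply hom_Z_kernel; symmetry; exact E]. }
  destruct Hker as [k [Hk Hker]].
  destruct (hom_Z_finite_image _ _ k Hk Hker) as [l Hl].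
  exists l. intro y. destruct (qnat_surj Q Zgroup y) as [a <-]. apply Hl.
Qed.

Section InjectiveOnZ.
Hypothesis qZ_inj : forall m n : Z, qnat Q Zgroup m = qnat Q Zgroup n -> m = n.

Lemma quotient_Z_retraction :
  exists psi : Q Zgroup -> Z, forall k, psi (qnat Q Zgroup k) = k.
Proof.
  exists (fun y => proj1_sig (constructive_indefinite_description _ (qnat_surj Q Zgroup y))).
  intro k. apply qZ_inj, proj2_sig.
Qed.

Lemma quotient_free_abelian (X : Type) : iso_free_abelian (Q (free_abelian X)) X.
Proof.
  destruct quotient_Z_retraction as [psi psi_q].
  apply (iso_free_abelian_of_retraction X _ (qnat Q (free_abelian X))
           (fun y x => psi (Fmap Q _ _ (coord_hom X x) y))).
  - apply qnat_surj.
  - intro a. extensionality x. rewrite qnat_natural. apply psi_q.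
Qed.

End InjectiveOnZ.

End QuotientOfIdentity.

Theorem theorem3p13 (Q : IdQuotient) (HQ : nontrivial_quotient Q) :
  in_ess_image Q nontrivial_finite_cyclic \/
  (forall X : Type, in_ess_image Q (fun H => iso_free_abelian H X)).
Proof.
  destruct (classic (forall m n : Z, qnat Q Zgroup m = qnat Q Zgroup n -> m = n))
    as [qZ_inj | qZ_not_inj].
  - right. intro X. exists (free_abelian X). apply quotient_free_abelian, qZ_inj.
  - left. exists Zgroup.
    apply not_all_ex_not in qZ_not_inj as [m Hm].
    apply not_all_ex_not in Hm as [n Hn].
    apply imply_to_and in Hn as [E Hmn].
    split; [|split].
    + exists (qnat Q Zgroup 1). apply quotient_Z_cyclic.
    + apply (quotient_Z_finite Q m n Hmn E).
    + exists (qnat Q Zgroup 1). apply qnat_Z1_neq1, HQ.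
Qed.
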